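(* Let $P=(X,\leq)$ be a partially ordered set whose incomparability graph is locally finite. Then there exist a partition of $X$ into antichains and a chain $C\subseteq X$ of $P$ such that $C$ intersects every member of the partition.
   Context: The incomparability graph of a poset $P=(X,\leq)$ is the graph with vertex set $X$ whose edges are the pairs $\{u,v\}$ of distinct elements that are incomparable in $P$ (neither $u\leq v$ nor $v\leq u$). A graph is locally finite if every vertex is adjacent to finitely many vertices. An antichain is a set of pairwise incomparable elements; a chain is a set of pairwise comparable elements. *)

From Stdlib Require Import List.

Set Implicit Arguments.
Section Posets.
Variable X : Type.
Variable le : X -> X -> Prop.

Definition is_partial_order : Prop :=
  (forall x, le x x) /\
  (forall x y, le x y -> le y x -> x = y) /\
  (forall x y z, le x y -> le y z -> le x z).

Definition comparable (u v : X) : Prop := le u v \/ le v u.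

Definition incomp_edge (u v : X) : Prop := u <> v /\ ~ comparable u v.

Definition locally_finite (E : X -> X -> Prop) : Prop :=
  forall v, exists l : list X, forall u, E v u -> In u l.

Definition antichain (A : X -> Prop) : Prop :=
  forall u v, A u -> A v -> u <> v -> ~ comparable u v.

Definition chain (C : X -> Prop) : Prop :=
  forall u v, C u -> C v -> comparable u v.

(* A partition of X: a family of nonempty, pairwise disjoint blocks
   covering X (blocks that share a point are equal as sets). *)
Definition is_partition (P : (X -> Prop) -> Prop) : Prop :=
  (forall B, P B -> exists x, B x) /\
  (forall x, exists B, P B /\ B x) /\
  (forall B B', P B -> P B' -> (exists x, B x /\ B' x) ->
     forall y, B y <-> B' y).

End Posets.

(** Encode a partition into antichains together with a chain meeting every
    block as a map [g] sending each element to the representative of its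
    block, the representatives forming a chain.  For a finite poset such a
    map is built by peeling off the antichain of maximal elements: solve
    the rest recursively and send the maximal elements to a maximal element
    lying above the (finite) chain of representatives found so far.
    Since [g x] is either [x] or an incomparable element, local finiteness
    leaves finitely many candidates for each value of [g], and a compactness
    argument (Zorn's lemma on finitely consistent partial assignments)
    extends the finite solutions to all of [X]. *)

From Stdlib Require Import List Classical ClassicalEpsilon Lia Wf_nat.
From mathcomp Require classical_sets.

Set Implicit Arguments.

Lemma functional_restriction_list (T U : Type) (A : T * U -> Prop) :
  (forall x v w, A (x, v) -> A (x, w) -> v = w) ->
  forall F : list T, exists L,
    (forall p, In p L -> A p) /\ forall x v, In x F -> A (x, v) -> In (x, v) L.
Proof.
  intros Afun. induction F as [|x F [L [LA HL]]].
  - exists nil. split; [intros p []|intros x v []].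
  - destruct (classic (exists v, A (x, v))) as [[v Axv]|Hno].
    + exists ((x, v) :: L). split.
      * intros p [<-|Hp]; auto.
      * intros y w [<-|Hy] Ayw; [left; f_equal; eauto|right; auto].
    + exists L. split; [exact LA|].
      intros y w [<-|Hy] Ayw; [exfalso; eauto|auto].
Qed.

Lemma chain_bound_list (T : Type) (Fam : (T -> Prop) -> Prop) :
  (forall A B, Fam A -> Fam B -> (forall p, A p -> B p) \/ (forall p, B p -> A p)) ->
  forall L : list T, L <> nil -> (forall p, In p L -> exists2 A, Fam A & A p) ->
  exists2 B, Fam B & forall p, In p L -> B p.
Proof.
  intros Htot. induction L as [|a L IH]; intros Hne HL; [contradiction|].
  destruct (HL a (or_introl eq_refl)) as [A FamA Aa].
  destruct L as [|b L].
  { exists A; [exact FamA|]. intros p [<-|[]]. exact Aa. }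
  destruct IH as [B FamB HB]; [discriminate|intros p Hp; apply HL; right; exact Hp|].
  destruct (Htot A B FamA FamB) as [AB|BA].
  - exists B; [exact FamB|]. intros p [<-|Hp]; auto.
  - exists A; [exact FamA|]. intros p [<-|Hp]; auto.
Qed.

Lemma incl_common_witness (K T : Type) (P : K -> list T -> Prop) :
  (forall k F F', incl F F' -> P k F -> P k F') ->
  forall ks : list K, (forall k, In k ks -> exists F, P k F) ->
  exists F, forall k, In k ks -> P k F.
Proof.
  intros Pup. induction ks as [|k ks IH]; intros Hks.
  - exists nil. intros k [].
  - destruct (Hks k (or_introl eq_refl)) as [Fk Hk].
    destruct IH as [F HF]; [intros k' Hk'; apply Hks; right; exact Hk'|].
    exists (Fk ++ F). intros k' [<-|Hk'].
    + apply Pup with Fk; [apply incl_appl, incl_refl|exact Hk].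
    + apply Pup with F; [apply incl_appr, incl_refl|auto].
Qed.

Section Transversal.

Variable X : Type.
Variable le : X -> X -> Prop.

Definition transversal_pair (g : X -> X) (x y : X) : Prop :=
  (g x = y -> g y = y) /\
  (g x = x -> g y = y -> comparable le x y) /\
  (x <> y -> g x = g y -> ~ comparable le x y).

Definition transversal_on (D : X -> Prop) (g : X -> X) : Prop :=
  forall x y, D x -> D y -> transversal_pair g x y.

Lemma transversal_pair_ext (g h : X -> X) (x y : X) :
  g x = h x -> g y = h y -> transversal_pair g x y -> transversal_pair h x y.
Proof.
  unfold transversal_pair. intros Ex Ey. rewrite <- Ex, <- Ey. exact id.
Qed.

Lemma transversal_on_ext (D : X -> Prop) (g h : X -> X) :
  (forall x, D x -> g x = h x) -> transversal_on D g -> transversal_on D h.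
Proof.
  intros E Tg x y Dx Dy. apply transversal_pair_ext with g; auto.
Qed.

Lemma transversal_partition (g : X -> X) :
  transversal_on (fun _ => True) g ->
  exists P : (X -> Prop) -> Prop,
    is_partition P /\
    (forall B, P B -> antichain le B) /\
    exists C : X -> Prop, chain le C /\ (forall B, P B -> exists x, C x /\ B x).
Proof.
  intros Tg.
  exists (fun B => exists c, g c = c /\ B = (fun z => g z = c)).
  split; [split; [|split]|split].
  - intros B [c [Hc ->]]. exists c. exact Hc.
  - intro x. exists (fun z => g z = g x). split; [|reflexivity].
    exists (g x). split; [|reflexivity].
    apply (Tg x (g x) I I). reflexivity.
  - intros B B' [c [_ ->]] [c' [_ ->]] [x [Hx Hx']] y.
    rewrite <- Hx, <- Hx'. tauto.
  - intros B [c [_ ->]] u v Hu Hv Hne.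
    apply (Tg u v I I); congruence.
  - exists (fun z => g z = z). split.
    + intros u v Hu Hv. apply (Tg u v I I); assumption.
    + intros B [c [Hc ->]]. exists c. auto.
Qed.

End Transversal.

Section FinitePoset.

Variable X : Type.
Variable le : X -> X -> Prop.
Hypothesis Hpo : is_partial_order le.

Definition maximal_in (F : list X) (m : X) : Prop :=
  forall y, In y F -> le m y -> y = m.

Lemma maximal_above (Q : X -> Prop) (l : list X) (x : X) : Q x ->
  exists m, Q m /\ (m = x \/ In m l) /\ le x m /\
    forall y, In y l -> Q y -> le m y -> y = m.
Proof.
  destruct Hpo as [Hrefl [Hanti Htrans]].
  induction l as [|a l IH]; intros Qx.
  - exists x. repeat split; auto. intros y [].
  - destruct (IH Qx) as [m [Qm [Hm [Hxm Hmax]]]].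
    destruct (classic (Q a /\ le m a /\ a <> m)) as [[Qa [Hma Hne]]|Hn].
    + exists a. split; [exact Qa|]. split; [right; left; reflexivity|].
      split; [eauto|].
      intros y [<-|Hy] Qy Hay; [reflexivity|].
      assert (y = m) as -> by (apply Hmax; eauto).
      exfalso. apply Hne. apply Hanti; assumption.
    + exists m. split; [exact Qm|]. split; [destruct Hm; [left|right; right]; assumption|].
      split; [exact Hxm|].
      intros y [<-|Hy] Qy Hmy; [|apply Hmax; assumption].
      apply NNPP. intro Hne. apply Hn. auto.
Qed.

Lemma maximal_above_chain (F : list X) (C : X -> Prop) (a : X) :
  In a F -> (forall c, C c -> In c F) ->
  (forall c d, C c -> C d -> comparable le c d) ->
  exists m, In m F /\ maximal_in F m /\ forall c, C c -> le c m.
Proof.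
  intros Ha CF Cchain. pose proof Hpo as [Hrefl [_ Htrans]].
  assert (Htop : exists t, In t F /\ forall c, C c -> le c t).
  { destruct (classic (exists c, C c)) as [[c Cc]|Hempty].
    - destruct (maximal_above C F c Cc) as [t [Ct [_ [_ Hmax]]]].
      exists t. split; [apply CF; exact Ct|].
      intros d Cd. destruct (Cchain d t Cd Ct) as [Hdt|Htd]; [exact Hdt|].
      rewrite (Hmax d (CF d Cd) Cd Htd). apply Hrefl.
    - exists a. split; [exact Ha|]. intros c Cc. exfalso. eauto. }
  destruct Htop as [t [Ht Hct]].
  destruct (maximal_above (fun _ => True) F t I) as [m [_ [Hm [Htm Hmax]]]].
  exists m. split; [destruct Hm as [->|Hm]; assumption|].
  split; [intros y Hy; apply Hmax; auto|].
  intros c Cc. apply Htrans with t; auto.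
Qed.

Lemma transversal_on_extend (D R : X -> Prop) (g : X -> X) (m : X) :
  antichain le (fun x => D x /\ ~ R x) ->
  ~ R m -> (forall c, R c -> g c = c -> le c m) ->
  (forall x, R x -> R (g x)) -> (forall x, ~ R x -> g x = m) ->
  transversal_on le R g -> transversal_on le D g.
Proof.
  intros Hanti Hm Hfix Hclosed Hout Tg x y Dx Dy. unfold transversal_pair.
  destruct (classic (R x)) as [Rx|Rx]; destruct (classic (R y)) as [Ry|Ry].
  - exact (Tg x y Rx Ry).
  - rewrite (Hout y Ry). split; [|split].
    + intros <-. exfalso. exact (Ry (Hclosed x Rx)).
    + intros Hx <-. left. exact (Hfix x Rx Hx).
    + intros _ Hxm. exfalso. apply Hm. rewrite <- Hxm. exact (Hclosed x Rx).
  - rewrite (Hout x Rx). split; [|split].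
    + intros <-. exfalso. exact (Hm Ry).
    + intros <- Hy. right. exact (Hfix y Ry Hy).
    + intros _ Hmy. exfalso. apply Hm. rewrite Hmy. exact (Hclosed y Ry).
  - rewrite (Hout x Rx), (Hout y Ry). split; [|split].
    + intros <-. reflexivity.
    + intros <- <-. left. apply (proj1 Hpo).
    + intros Hne _. apply Hanti; auto.
Qed.

Lemma drop_maximal (F : list X) : F <> nil ->
  exists R, length R < length F /\ forall x, In x R <-> In x F /\ ~ maximal_in F x.
Proof.
  intros Hne. destruct F as [|a F0]; [contradiction|]. set (F := a :: F0).
  set (nonmax := fun x => if excluded_middle_informative (maximal_in F x)
                          then false else true).
  exists (filter nonmax F). split.
  - destruct (maximal_above (fun _ => True) F a I) as [m [_ [Hm [_ Hmax]]]].
    assert (HmF : In m F) by (destruct Hm as [->|Hm]; [left|]; auto).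
    assert (length (filter nonmax F) <> length F).
    { intro E. apply filter_length_forallb in E.
      rewrite forallb_forall in E. specialize (E m HmF). unfold nonmax in E.
      destruct (excluded_middle_informative _) as [_|Hnmax]; [discriminate|].
      apply Hnmax. intros y Hy. apply Hmax; auto. }
    assert (length (filter nonmax F) <= length F) by apply filter_length_le.
    lia.
  - intro x. rewrite filter_In. unfold nonmax.
    destruct (excluded_middle_informative _); intuition discriminate.
Qed.

Lemma finite_transversal (F : list X) :
  exists g, (forall x, In x F -> In (g x) F) /\ transversal_on le (fun x => In x F) g.
Proof.
  remember (length F) as n eqn:Hn. revert F Hn.
  induction n as [n IH] using lt_wf_ind. intros F ->.
  destruct F as [|a F0].
  { exists (fun x => x). split; [intros x []|intros x y []]. }
  set (F := a :: F0).
  destruct (drop_maximal (F := F)) as [R [Hlen HR]]; [discriminate|].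
  assert (Hmax : forall x, In x F -> ~ In x R -> maximal_in F x).
  { intros x Hx HxR. apply NNPP. intro Hnmax. apply HxR, HR. auto. }
  destruct (IH _ Hlen R eq_refl) as [g' [Hg'R Tg']].
  destruct (maximal_above_chain F (fun c => In c R /\ g' c = c) a)
    as [m [HmF [Hmmax Hmtop]]].
  { left. reflexivity. }
  { intros c [Hc _]. apply HR, Hc. }
  { intros c d [Rc Hc] [Rd Hd]. apply (Tg' c d Rc Rd); assumption. }
  assert (HmR : ~ In m R) by (rewrite HR; tauto).
  set (g := fun x => if excluded_middle_informative (In x R) then g' x else m).
  assert (Hg : forall x, In x R -> g x = g' x).
  { intros x Hx. unfold g. destruct (excluded_middle_informative _); tauto. }
  assert (Hgout : forall x, ~ In x R -> g x = m).
  { intros x Hx. unfold g. destruct (excluded_middle_informative _); tauto. }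
  exists g. split.
  - intros x Hx. destruct (classic (In x R)) as [HxR|HxR].
    + rewrite Hg by exact HxR. apply HR, Hg'R, HxR.
    + rewrite Hgout by exact HxR. exact HmF.
  - apply transversal_on_extend with (R := fun x => In x R) (m := m).
    + intros u v [Fu Ru] [Fv Rv] Hne [Huv|Hvu].
      * apply Hne. symmetry. apply (Hmax u Fu Ru); assumption.
      * apply Hne. apply (Hmax v Fv Rv); assumption.
    + exact HmR.
    + intros c Rc Hc. apply Hmtop. rewrite <- Hg; auto.
    + intros x Hx. rewrite Hg by exact Hx. apply Hg'R, Hx.
    + exact Hgout.
    + apply transversal_on_ext with g'; [|exact Tg'].
      intros x Hx. symmetry. apply Hg, Hx.
Qed.

End FinitePoset.

Section Compactness.

Variable X : Type.
Variable le : X -> X -> Prop.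
Hypothesis Hpo : is_partial_order le.

Definition solves (F : list X) (g : X -> X) : Prop :=
  transversal_on le (fun x => In x F) g /\
  forall x, In x F -> g x = x \/ incomp_edge le x (g x).

Definition respects (A : X * X -> Prop) (F : list X) (g : X -> X) : Prop :=
  forall x v, In x F -> A (x, v) -> g x = v.

Definition consistent (A : X * X -> Prop) : Prop :=
  forall F, exists g, solves F g /\ respects A F g.

Lemma finite_solves (F : list X) : exists g, solves F g.
Proof.
  destruct (finite_transversal Hpo F) as [g [Hclosed Tg]].
  exists g. split; [exact Tg|].
  intros x Hx. destruct (classic (g x = x)) as [E|Hne]; [left; exact E|right].
  destruct (Tg x (g x) Hx (Hclosed x Hx)) as [Hrep _].
  specialize (Hrep eq_refl).
  split; [congruence|].
  apply (Tg x (g x) Hx (Hclosed x Hx)); congruence.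
Qed.

Lemma solves_incl (F F' : list X) (g : X -> X) :
  incl F' F -> solves F g -> solves F' g.
Proof.
  intros Hincl [Tg Hnb]. split; [intros x y Hx Hy; apply Tg|intros x Hx; apply Hnb]; auto.
Qed.

Lemma consistent_functional (A : X * X -> Prop) :
  consistent A -> forall x v w, A (x, v) -> A (x, w) -> v = w.
Proof.
  intros HA x v w Hv Hw. destruct (HA (x :: nil)) as [g [_ Hg]].
  rewrite <- (Hg x v), <- (Hg x w); auto; left; reflexivity.
Qed.

Lemma consistent_chain_union (Fam : (X * X -> Prop) -> Prop) :
  (forall A, Fam A -> consistent A) ->
  (forall A B, Fam A -> Fam B -> (forall p, A p -> B p) \/ (forall p, B p -> A p)) ->
  consistent (fun p => exists2 A, Fam A & A p).
Proof.
  intros Hcons Htot F.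
  assert (Ufun : forall x v w, (exists2 A, Fam A & A (x, v)) ->
                   (exists2 A, Fam A & A (x, w)) -> v = w).
  { intros x v w [A FamA Av] [B FamB Bw].
    destruct (Htot A B FamA FamB) as [AB|BA].
    - apply (consistent_functional (Hcons B FamB) x); auto.
    - apply (consistent_functional (Hcons A FamA) x); auto. }
  destruct (functional_restriction_list (fun p => exists2 A, Fam A & A p) Ufun F) as [L [LU HL]].
  destruct L as [|p L].
  - destruct (finite_solves F) as [g Hg].
    exists g. split; [exact Hg|]. intros x v Hx Hxv. destruct (HL x v Hx Hxv).
  - destruct (chain_bound_list Fam Htot (L := p :: L)) as [B FamB HB]; [discriminate|exact LU|].
    destruct (Hcons B FamB F) as [g [Hg HgB]].
    exists g. split; [exact Hg|].
    intros x v Hx Hxv. apply HgB; auto.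
Qed.

Lemma consistent_maximal_total (A : X * X -> Prop) :
  locally_finite (incomp_edge le) -> consistent A ->
  (forall B, classical_sets.proper A B -> ~ consistent B) ->
  forall x, exists v, A (x, v).
Proof.
  intros Hlf HA Amax x0. apply NNPP. intro Hno.
  destruct (Hlf x0) as [nbs Hnbs].
  set (Bad := fun v F => ~ exists g, solves F g /\
                respects (fun p => A p \/ p = (x0, v)) F g).
  assert (Bad_incl : forall v F F', incl F F' -> Bad v F -> Bad v F').
  { intros v F F' Hincl HF [g [Hg HgA]]. apply HF.
    exists g. split; [exact (solves_incl Hincl Hg)|].
    intros x w Hx. apply HgA, Hincl, Hx. }
  destruct (incl_common_witness Bad Bad_incl (x0 :: nbs)) as [F HF].
  { intros v _. apply NNPP. intro Hgood. apply (Amax (fun p => A p \/ p = (x0, v))).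
    - split; [intros p Hp; left; exact Hp|].
      intro Hsub. apply Hno. exists v. apply Hsub. right. reflexivity.
    - intro F. apply NNPP. intro HbadF. apply Hgood. exists F. exact HbadF. }
  destruct (HA (x0 :: F)) as [g [Hg HgA]].
  apply (HF (g x0)).
  - destruct (proj2 Hg x0 (or_introl eq_refl)) as [E|Hedge].
    + left. symmetry. exact E.
    + right. apply Hnbs, Hedge.
  - exists g. split; [apply solves_incl with (x0 :: F); [intros z Hz; right|]; auto|].
    intros x w Hx [Hxw|E].
    + apply HgA; [right|]; auto.
    + injection E as -> ->. reflexivity.
Qed.

Lemma consistent_graph_transversal (A : X * X -> Prop) (g : X -> X) :
  consistent A -> (forall x, A (x, g x)) -> transversal_on le (fun _ => True) g.
Proof.
  intros HA Hg x y _ _.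
  destruct (HA (x :: y :: nil)) as [g0 [[Tg0 _] Hg0]].
  apply transversal_pair_ext with g0.
  - apply Hg0; [left|]; auto.
  - apply Hg0; [right; left|]; auto.
  - apply Tg0; [left|right; left]; reflexivity.
Qed.

Lemma exists_transversal :
  locally_finite (incomp_edge le) -> exists g, transversal_on le (fun _ => True) g.
Proof.
  intros Hlf.
  destruct (@classical_sets.Zorn_bigcup (X * X) consistent) as [A [HA Amax]].
  { intros Fam Hcons Htot. exact (consistent_chain_union Fam Hcons Htot). }
  destruct (choice _ (consistent_maximal_total Hlf HA Amax)) as [g Hg].
  exists g. exact (consistent_graph_transversal g HA Hg).
Qed.

End Compactness.

Theorem theorem4 (X : Type) (le : X -> X -> Prop)
  (Hpo : is_partial_order le)
  (Hlf : locally_finite (incomp_edge le)) :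
  exists P : (X -> Prop) -> Prop,
    is_partition (X:=X) P /\
    (forall B, P B -> antichain le B) /\
    exists C : X -> Prop,
      chain le C /\
      (forall B, P B -> exists x, C x /\ B x).
Proof.
  destruct (exists_transversal Hpo Hlf) as [g Tg].
  exact (transversal_partition Tg).
Qed.
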